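(* Let $\Gamma$ be a countable discrete group and $\rho\colon\Gamma\times X\to X$ a free measure preserving action on a standard probability space $(X,\mu)$, with orbit equivalence relation $R_\rho\subset X\times X$. The natural inclusion $\iota\colon L^\infty(X)\rtimes_{\mathrm{alg}}\Gamma\to R_\rho(X)$ induces an isomorphism $c(\iota)$ on completions with respect to the rank metric.
   Context: $L^\infty(X)\rtimes_{\mathrm{alg}}\Gamma$ is the algebraic crossed product (finite sums $\sum f_gu_g$, $f_g\in L^\infty(X)$). For a discrete measurable equivalence relation $R$ on $(X,\mu)$, $L^\infty(R)$ denotes its (Feldman–Moore) von Neumann algebra, and the relation ring is $R(X)=\{\sum_{i=1}^n f_i\phi_i\colon f_i\in L^\infty(X),\ \phi_i \text{ a partial (local) isomorphism whose graph lies in } R\}\subset L^\infty(R)$. Any left $L^\infty(X)$-module $L$ is regarded as an $L^\infty(X)$-bimodule with both actions equal to the given left action (''diagonal left action''); the rank of $\xi\in L$ is $[\xi]=\inf\{\tau(p)+\tau(q)\colon p,q \text{ projections in } L^\infty(X),\ (1-p)(1-q)\xi=0\}$ with $\tau(f)=\int f\,d\mu$, the rank metric is $d(\xi,\zeta)=[\xi-\zeta]$, and $c(L)$ denotes the completion (Cauchy sequences modulo null sequences). Both $L^\infty(X)\rtimes_{\mathrm{alg}}\Gamma$ and $R_\rho(X)$ are left $L^\infty(X)$-modules by left multiplication. *)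

From HB Require Import structures.
From mathcomp Require Import all_boot all_algebra.
From mathcomp Require Import all_classical all_reals all_analysis.
From mathcomp Require Import complex.

Set Implicit Arguments.
Unset Strict Implicit.
Unset Printing Implicit Defensive.

Import GRing.Theory Num.Theory.
Local Open Scope classical_set_scope.
Local Open Scope ring_scope.

(* X is standard Borel: Borel isomorphic to a Borel subset of R. *)
Definition standard_borel (R : realType) {d : measure_display}
  (X : measurableType d) : Prop :=
  exists e : X -> R, injective e /\ measurable_fun setT e /\
    forall A : set X, measurable A -> measurable (e @` A).

Section RankCompletion.
Context (R : realType) {d : measure_display} (X : measurableType d)
  (mu : probability X R).
Local Notation C := R[i].

(* representatives of elements of L^oo(X) (complex valued, bounded,
   measurable); a.e.-equality is taken care of by the zero predicates
   below *)
Definition Linf (f : X -> C) : Prop :=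
  measurable_fun setT (fun x => complex.Re (f x)) /\
  measurable_fun setT (fun x => complex.Im (f x)) /\
  exists M : R, forall x, `|complex.Re (f x)| <= M /\ `|complex.Im (f x)| <= M.

Definition one_minus_proj (P : set X) : X -> C :=
  fun x => Complex (\1_(~` P) x : R) 0.

Record lmodLinf := LmodLinf {
  lm_car : Type;
  lm_valid : lm_car -> Prop;
  lm_sub : lm_car -> lm_car -> lm_car;
  lm_mul : (X -> C) -> lm_car -> lm_car;
  lm_zero : lm_car -> Prop }.

(* rank of xi, for the diagonal bimodule structure:
   inf { tau(p) + tau(q) : (1-p)(1-q) xi = 0 } *)
Definition rank (M : lmodLinf) (xi : lm_car M) : \bar R :=
  ereal_inf [set r | exists P Q : set X, measurable P /\ measurable Q /\
     lm_zero (lm_mul (one_minus_proj P) (lm_mul (one_minus_proj Q) xi)) /\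
     r = (mu P + mu Q)%E].

Definition rk_cauchy (M : lmodLinf) (s : nat -> lm_car M) : Prop :=
  (forall n, lm_valid (s n)) /\
  forall e : R, 0 < e -> exists N : nat, forall n m : nat,
    (N <= n)%N -> (N <= m)%N -> (rank (lm_sub (s n) (s m)) < e%:E)%E.

Definition rk_equiv (M : lmodLinf) (s t : nat -> lm_car M) : Prop :=
  forall e : R, 0 < e -> exists N : nat, forall n : nat,
    (N <= n)%N -> (rank (lm_sub (s n) (t n)) < e%:E)%E.

(* The map c(f) : c(M) -> c(N), [s] |-> [f o s], on completions
   (Cauchy sequences modulo null sequences) is well defined and bijective. *)
Definition completion_iso (M N : lmodLinf) (f : lm_car M -> lm_car N) : Prop :=
  [/\ (forall s, rk_cauchy s -> rk_cauchy (f \o s)),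
      (forall s t, rk_cauchy s -> rk_cauchy t -> rk_equiv s t ->
         rk_equiv (f \o s) (f \o t)),
      (forall s t, rk_cauchy s -> rk_cauchy t -> rk_equiv (f \o s) (f \o t) ->
         rk_equiv s t)
    & (forall u, rk_cauchy u -> exists2 s, rk_cauchy s & rk_equiv (f \o s) u)].

Context (G : groupType) (rho : G -> X -> X).

Definition mp_action : Prop :=
  [/\ (forall x, rho monoid.one x = x),
      (forall g h x, rho (monoid.mul g h) x = rho g (rho h x)),
      (forall g, measurable_fun setT (rho g))
    & (forall g A, measurable A -> mu (rho g @^-1` A) = mu A)].

Definition free_action : Prop :=
  forall g x, rho g x = x -> g = monoid.one.

Definition orbit_rel (x y : X) : Prop := exists g, y = rho g x.

Definition partial_iso (phi : X -> X) (A : set X) : Prop :=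
  [/\ measurable A, measurable_fun A phi,
      (forall x y, A x -> A y -> phi x = phi y -> x = y),
      (forall B, measurable B -> B `<=` A ->
         measurable (phi @` B) /\ mu (phi @` B) = mu B)
    & (forall x, A x -> orbit_rel x (phi x))].

(* a finite formal sum  \sum f_g u_g,  represented by a list of (g, f_g) *)
Definition cp_car := seq (G * (X -> C)).

Definition cp_valid (xi : cp_car) : Prop := forall p, p \in xi -> Linf p.2.

Definition cp_sub (xi zeta : cp_car) : cp_car :=
  xi ++ map (fun p => (p.1, fun x => - p.2 x)) zeta.

Definition cp_mul (f : X -> C) (xi : cp_car) : cp_car :=
  map (fun p => (p.1, fun x => f x * p.2 x)) xi.

Definition cp_zero (xi : cp_car) : Prop :=
  forall g : G, {ae mu, forall x, \sum_(p <- xi | p.1 == g) p.2 x = 0}.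

Definition cp_mod : lmodLinf := LmodLinf cp_valid cp_sub cp_mul cp_zero.

(* a finite sum \sum f_i phi_i, represented by a list of (f_i, (phi_i, dom phi_i)) *)
Definition rr_car := seq ((X -> C) * ((X -> X) * set X)).

Definition rr_valid (xi : rr_car) : Prop :=
  forall p, p \in xi -> Linf p.1 /\ partial_iso p.2.1 p.2.2.

Definition rr_sub (xi zeta : rr_car) : rr_car :=
  xi ++ map (fun p => (fun x => - p.1 x, p.2)) zeta.

Definition rr_mul (f : X -> C) (xi : rr_car) : rr_car :=
  map (fun p => (fun x => f x * p.1 x, p.2)) xi.

(* matrix (kernel) of \sum f_i phi_i as an element of L^oo(R_rho):
   (f phi)(x, y) = f(x) if y \in dom phi and phi y = x, and 0 otherwise *)
Definition rr_kernel (xi : rr_car) (x y : X) : C :=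
  \sum_(p <- xi) (if `[< p.2.2 y /\ p.2.1 y = x >] then p.1 x else 0).

(* zero in L^oo(R_rho): the kernel vanishes a.e. for the counting measure
   on R_rho, i.e. for mu-a.e. x it vanishes on the whole fiber *)
Definition rr_zero (xi : rr_car) : Prop :=
  {ae mu, forall x, forall y, rr_kernel xi x y = 0}.

Definition rr_mod : lmodLinf := LmodLinf rr_valid rr_sub rr_mul rr_zero.

Definition iota_incl (xi : lm_car cp_mod) : lm_car rr_mod :=
  map (fun p => (p.2, (rho p.1, setT))) xi.

End RankCompletion.


Arguments completion_iso {R d X} mu M N f.

From mathcomp Require Import all_boot all_order all_algebra.
From mathcomp Require Import all_classical all_reals all_analysis.
From mathcomp Require Import complex lra measurable_realfun.

Set Implicit Arguments.
Unset Strict Implicit.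
Unset Printing Implicit Defensive.

Import Order.TTheory GRing.Theory Num.Theory.
Local Open Scope classical_set_scope.
Local Open Scope ring_scope.

(* The rank of an element of either module only sees, for each [x], whether
   its fiber over [x] vanishes: the coefficients [(f_g x)_g] of [sum f_g u_g],
   resp. the kernel row [y |-> k(x, y)].  [iota] identifies these fibers
   because the action is free, so [iota] is isometric for the rank metric.
   Its image is dense: a partial isomorphism [phi] with domain [A] has graph in
   the orbit relation, so [A] is covered by the countably many pieces on which
   [phi] agrees with some [rho g]; on finitely many of them, disjointified,
   [f phi] is exactly an element of the crossed product, and the remaining
   pieces have small measure.  An isometry with dense image induces an
   isomorphism of completions. *)

Lemma countable_enum (T : Type) (t0 : T) :
  countable [set: T] -> exists e : nat -> T, forall t, exists n, e n = t.
Proof.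
move=> /pfcard_geP [TE|[e]]; first by have : [set: T] t0 by []; rewrite TE.
by exists e => t; have [n _ <-] := @surj _ _ _ _ e t I; exists n.
Qed.

Lemma sum_if_trivIset (V : nmodType) (T : Type) (F : (set T)^nat) (c : V)
  (t : T) N :
  trivIset setT F ->
  \sum_(n <- iota 0 N) (if `[< F n t >] then c else 0) =
  if `[< (\big[setU/set0]_(n < N) F n) t >] then c else 0.
Proof.
move=> tF; elim: N => [|N ih]; first by rewrite big_nil big_ord0; case: asboolP.
rewrite -addn1 iotaD big_cat big_seq1 /= ih addn1 big_ord_recr /=.
case: asboolP => [UN|nUN]; case: asboolP => [FN|nFN].
- move: UN; rewrite -bigcup_mkord => -[k /= kN Fk].
  by have kE := tF k N I I (ex_intro _ t (conj Fk FN)); rewrite kE ltnn in kN.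
- by rewrite addr0 asboolT //; left.
- by rewrite add0r asboolT //; right.
- by rewrite addr0 asboolF // => -[].
Qed.

Lemma measure_setD_bigsetU_lt (R : realType) (d : measure_display)
  (T : measurableType d) (nu : {measure set T -> \bar R}) (A : set T)
  (F : (set T)^nat) (e : R) :
  measurable A -> (nu A < +oo)%E -> (forall n, measurable (F n)) ->
  A `<=` \bigcup_n F n -> 0 < e ->
  exists N, (nu (A `\` \big[setU/set0]_(k < N) F k) < e%:E)%E.
Proof.
move=> mA Afin mF AF e0.
pose D N := A `\` \big[setU/set0]_(k < N) F k.
have mD N : measurable (D N).
  by apply: measurableD => //; exact: bigsetU_measurable.
have D0 : \bigcap_N D N = set0.
  apply/seteqP; split => // y; rewrite /D => Dy; have [Ay _] := Dy 0%N I.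
  have [n _ Fny] := AF y Ay.
  by have [_] := Dy n.+1 I; apply; rewrite big_ord_recr /=; right.
have D0fin : (nu (D 0%N) < +oo)%E.
  apply: le_lt_trans Afin; apply: le_measure; rewrite ?inE //.
  exact: subDsetl.
have Ddecr : nonincreasing_seq D.
  move=> n m nm; apply/subsetPset; rewrite /D => y [Ay].
  rewrite -!bigcup_mkord => nU.
  split => // -[k /= km Fk]; apply: nU; exists k => //=.
  exact: leq_trans km nm.
have := nonincreasing_cvg_mu D0fin mD; rewrite D0 measure0.
move=> /(_ measurable0 Ddecr) cv.
have [N _ hN] := cv _ (nbhs_open_ereal_lt (f := fun=> e) e0).
by exists N; exact: (hN N (leqnn N)).
Qed.

Section RelationRingCompletion.
Context (R : realType) (d : measure_display) (X : measurableType d)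
  (mu : probability X R).
Local Notation C := R[i].
Local Notation omp := (@one_minus_proj R d X).

Lemma one_minus_proj_mul_eq0 (P Q : set X) x (k : C) :
  omp P x * (omp Q x * k) = 0 <-> (~ P x -> ~ Q x -> k = 0).
Proof.
have ompE (S : set X) : omp S x = if `[< S x >] then 0 else 1.
  rewrite /one_minus_proj indicE; case: asboolP => Sx.
  - by rewrite memNset //=; apply.
  - by rewrite mem_set.
rewrite !ompE; split.
- by case: asboolP => // _; case: asboolP => // _; rewrite !mul1r.
- case: asboolP => [|nP h]; first by rewrite mul0r.
  case: asboolP => [|nQ]; first by rewrite mul0r mulr0.
  by rewrite h // !mulr0.
Qed.

Definition mask (S : set X) (f : X -> C) (x : X) : C :=
  Complex (complex.Re (f x) * \1_S x) (complex.Im (f x) * \1_S x).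

Lemma maskE (S : set X) f x : mask S f x = if `[< S x >] then f x else 0.
Proof.
rewrite /mask indicE; case: asboolP => Sx.
- by rewrite mem_set // !mulr1; case: (f x).
- by rewrite memNset // !mulr0.
Qed.

Lemma Linf_mask (S : set X) f : measurable S -> Linf f -> Linf (mask S f).
Proof.
move=> mS [mRe [mIm [K hK]]]; split; [|split].
- exact: measurable_funM mRe (@measurable_indic _ _ R setT _ mS).
- exact: measurable_funM mIm (@measurable_indic _ _ R setT _ mS).
- exists K => x; rewrite maskE; case: asboolP => _; first exact: hK.
  by have := le_trans (normr_ge0 _) (hK x).1; rewrite normr0.
Qed.

Lemma measurable_eq_standard_borel (d' : measure_display)
  (T : measurableType d') (D : set T) (f g : T -> X) :
  standard_borel R X -> measurable D -> measurable_fun D f ->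
  measurable_fun D g -> measurable (D `&` [set t | f t = g t]).
Proof.
move=> [e [einj [me _]]] mD mf mg.
have -> : [set t | f t = g t] = (fun t => e (f t) - e (g t)) @^-1` [set 0].
  apply/seteqP; split => t /=; first by move->; rewrite subrr.
  by move/subr0_eq/einj.
exact: (measurable_funB (measurableT_comp me mf) (measurableT_comp me mg)).
Qed.

(* [ev a x] is the fiber of [a] over [x]; [a] is zero iff almost every fiber
   vanishes. *)
Definition fiberwise (M : lmodLinf R X) (I : Type)
  (ev : lm_car M -> X -> I -> C) : Prop :=
  [/\ forall a b x i, ev (lm_sub a b) x i = ev a x i - ev b x i,
      forall f a x i, ev (lm_mul f a) x i = f x * ev a x i
    & forall a, lm_zero a <-> {ae mu, forall x i, ev a x i = 0}].

Section Fiberwise.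
Variables (M : lmodLinf R X) (I : Type) (ev : lm_car M -> X -> I -> C).
Hypothesis evM : fiberwise ev.

Lemma zero_one_minus_projP (P Q : set X) (a : lm_car M) :
  lm_zero (lm_mul (omp P) (lm_mul (omp Q) a)) <->
  {ae mu, forall x, ~ P x -> ~ Q x -> forall i, ev a x i = 0}.
Proof.
have [_ evmul zeroP] := evM; rewrite zeroP.
split; apply: filterS => x h.
- move=> nP nQ i; move: (h i); rewrite !evmul.
  by move=> /one_minus_proj_mul_eq0; apply.
- by move=> i; rewrite !evmul; apply/one_minus_proj_mul_eq0 => nP nQ; apply: h.
Qed.

Lemma rank_ltP (a : lm_car M) (e : R) :
  (rank mu a < e%:E)%E <-> exists S : set X, [/\ measurable S,
    (mu S < e%:E)%E & {ae mu, forall x, ~ S x -> forall i, ev a x i = 0}].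
Proof.
split.
- move=> /ereal_inf_lt [_ [P [Q [mP [mQ [/zero_one_minus_projP z ->]]]]]] lt.
  exists (P `|` Q); split; first exact: measurableU.
    exact: le_lt_trans (measureU2 _ mP mQ) lt.
  by apply: filterS z => x h nPQ; apply: h => ?; apply: nPQ; [left|right].
- move=> [S [mS lt z]]; apply: le_lt_trans lt; apply: ereal_inf_lbound.
  exists S, set0; do 3 split => //; last by rewrite measure0 adde0.
  by apply/zero_one_minus_projP; apply: filterS z => x h nS _; apply: h.
Qed.

Lemma rank_lt_mono (a b : lm_car M) (e : R) :
  (forall x, (forall i, ev a x i = 0) -> forall i, ev b x i = 0) ->
  (rank mu a < e%:E)%E -> (rank mu b < e%:E)%E.
Proof.
move=> ab /rank_ltP [S [mS lt z]]; apply/rank_ltP; exists S; split => //.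
by apply: filterS z => x h nS; apply/ab/h.
Qed.

Lemma rank_ltD (a b c : lm_car M) (e1 e2 : R) :
  (forall x, (forall i, ev a x i = 0) -> (forall i, ev b x i = 0) ->
     forall i, ev c x i = 0) ->
  (rank mu a < e1%:E)%E -> (rank mu b < e2%:E)%E ->
  (rank mu c < (e1 + e2)%:E)%E.
Proof.
move=> abc /rank_ltP [S [mS ltS zS]] /rank_ltP [T [mT ltT zT]].
apply/rank_ltP; exists (S `|` T); split; first exact: measurableU.
  by rewrite EFinD; apply: le_lt_trans (measureU2 _ mS mT) (lteD ltS ltT).
by apply: filterS2 zS zT => x hS hT nST; apply: abc; [apply: hS|apply: hT];
  move=> ?; apply: nST; [left|right].
Qed.

Lemma rank_subC (a b : lm_car M) (e : R) :
  (rank mu (lm_sub a b) < e%:E)%E -> (rank mu (lm_sub b a) < e%:E)%E.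
Proof.
have [evsub _ _] := evM.
by apply: rank_lt_mono => x h i; rewrite evsub -opprB -evsub h oppr0.
Qed.

Lemma rank_sub_triangle (a b c : lm_car M) (e1 e2 : R) :
  (rank mu (lm_sub a b) < e1%:E)%E -> (rank mu (lm_sub b c) < e2%:E)%E ->
  (rank mu (lm_sub a c) < (e1 + e2)%:E)%E.
Proof.
have [evsub _ _] := evM.
apply: rank_ltD => x hab hbc i; move: (hab i) (hbc i); rewrite !evsub.
by move=> /subr0_eq -> /subr0_eq ->; rewrite subrr.
Qed.

Lemma rk_cauchy_equiv (u v : nat -> lm_car M) :
  rk_cauchy mu u -> (forall n, lm_valid (v n)) -> rk_equiv mu v u ->
  rk_cauchy mu v.
Proof.
move=> [_ uc] vv vu; split => // e e0.
have e30 : 0 < e / 3 by rewrite divr_gt0.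
have [N0 hN0] := uc _ e30; have [N1 hN1] := vu _ e30.
exists (maxn N0 N1) => n m; rewrite !geq_max => /andP[n0 n1] /andP[m0 m1].
have -> : e = e / 3 + e / 3 + e / 3 by lra.
apply: rank_sub_triangle (rank_subC (hN1 m m1)).
exact: rank_sub_triangle (hN1 n n1) (hN0 n m n0 m0).
Qed.

End Fiberwise.

Lemma rank_fiberwise_eq (M N : lmodLinf R X) (I J : Type)
  (evM : lm_car M -> X -> I -> C) (evN : lm_car N -> X -> J -> C)
  (a : lm_car M) (b : lm_car N) :
  fiberwise evM -> fiberwise evN ->
  (forall x, (forall j, evN b x j = 0) <-> (forall i, evM a x i = 0)) ->
  rank mu b = rank mu a.
Proof.
move=> hM hN ab; rewrite /rank; congr ereal_inf; apply/funext => r.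
apply/propext; split => -[P [Q [mP [mQ [z ->]]]]]; exists P, Q;
  do 3 split => //; move: z.
- move=> /(zero_one_minus_projP hN) z; apply/(zero_one_minus_projP hM).
  by apply: filterS z => x h nP nQ; apply/ab/h.
- move=> /(zero_one_minus_projP hM) z; apply/(zero_one_minus_projP hN).
  by apply: filterS z => x h nP nQ; apply/ab/h.
Qed.

Lemma completion_iso_dense_isometry (M N : lmodLinf R X) (J : Type)
  (evN : lm_car N -> X -> J -> C) (f : lm_car M -> lm_car N) :
  fiberwise evN ->
  (forall a, lm_valid a -> lm_valid (f a)) ->
  (forall a b, rank mu (lm_sub (f a) (f b)) = rank mu (lm_sub a b)) ->
  (forall u e, lm_valid u -> 0 < e ->
     exists2 s, lm_valid s & (rank mu (lm_sub u (f s)) < e%:E)%E) ->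
  completion_iso mu M N f.
Proof.
move=> hN fv fiso dense.
have cauchy_f s : rk_cauchy mu s -> rk_cauchy mu (f \o s).
  move=> [sv sc]; split => [n|e e0]; first exact: fv.
  by have [K hK] := sc e e0; exists K => n m hn hm /=; rewrite fiso; apply: hK.
split => //.
- move=> s t _ _ st e e0; have [K hK] := st e e0.
  by exists K => n hn /=; rewrite fiso; apply: hK.
- move=> s t _ _ st e e0; have [K hK] := st e e0.
  by exists K => n hn; rewrite -fiso; apply: hK.
- move=> u [uv uc].
  have /choice [s hs] : forall n, exists s : lm_car M, lm_valid s /\
      (rank mu (lm_sub (u n) (f s)) < (n.+1%:R^-1)%:E)%E.
    move=> n; have n0 : 0 < n.+1%:R^-1 :> R by rewrite invr_gt0.
    by have [s ??] := dense (u n) _ (uv n) n0; exists s.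
  have fsu : rk_equiv mu (f \o s) u.
    move=> e e0; have [K _ hK] := near_infty_natSinv_lt (PosNum e0).
    exists K => n hn; apply: (rank_subC hN); apply: lt_trans (hs n).2 _.
    by rewrite lte_fin; apply: hK.
  exists s => //.
  have [_ sc] := rk_cauchy_equiv hN (conj uv uc) (fun n => fv _ (hs n).1) fsu.
  split => [n|e e0]; first exact: (hs n).1.
  by have [K hK] := sc e e0; exists K => n m hn hm; rewrite -fiso; apply: hK.
Qed.


Section CrossedProductAndRelationRing.
Context (G : groupType) (rho : G -> X -> X).
Local Notation iota := (@iota_incl R d X mu G rho).

Definition cp_coef (xi : cp_car R X G) (x : X) (g : G) : C :=
  \sum_(p <- xi | p.1 == g) p.2 x.

Lemma cp_fiberwise : fiberwise (M := cp_mod mu G) cp_coef.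
Proof.
split.
- by move=> a b x g; rewrite /cp_coef /= /cp_sub big_cat big_map /= sumrN.
- by move=> f a x g; rewrite /cp_coef /= /cp_mul big_map mulr_sumr.
- move=> a; split => [z|z g]; last by apply: filterS z => x; apply.
  pose gs := map fst a.
  have /ae_foralln : forall n,
      {ae mu, forall x, cp_coef a x (nth 1%g gs n) = 0} by move=> n; exact: z.
  apply: filterS => x hx g.
  have [gin|gout] := boolP (g \in gs); first by rewrite -(nth_index 1%g gin).
  rewrite /cp_coef big1_seq // => p /andP[/eqP gE pin].
  by case/negP: gout; rewrite -gE map_f.
Qed.

Lemma rr_kernel_cat (a b : rr_car R X) x y :
  rr_kernel (a ++ b) x y = rr_kernel a x y + rr_kernel b x y.
Proof. exact: big_cat. Qed.

Lemma rr_kernel_sub (a b : rr_car R X) x y :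
  rr_kernel (rr_sub a b) x y = rr_kernel a x y - rr_kernel b x y.
Proof.
rewrite rr_kernel_cat /rr_kernel big_map -sumrN; congr (_ + _).
by apply: eq_bigr => p _; case: ifP; rewrite ?oppr0.
Qed.

Lemma rr_fiberwise : fiberwise (M := rr_mod mu rho) (@rr_kernel R d X).
Proof.
split => //; first exact: rr_kernel_sub.
move=> f a x y; rewrite /rr_kernel /= /rr_mul big_map mulr_sumr.
by apply: eq_bigr => p _ /=; case: ifP; rewrite ?mulr0.
Qed.

Lemma iota_sub (a b : cp_car R X G) :
  iota (cp_sub a b) = rr_sub (iota a) (iota b).
Proof. by rewrite /iota_incl /cp_sub /rr_sub map_cat -!map_comp. Qed.

Lemma iota_cat (a b : cp_car R X G) : iota (a ++ b) = iota a ++ iota b.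
Proof. exact: map_cat. Qed.

Hypothesis HA : mp_action mu rho.

Lemma rhoK g x : rho g^-1%g (rho g x) = x.
Proof. by case: HA => rho1 rhoM _ _; rewrite -rhoM mulVg rho1. Qed.

Lemma rhoVK g x : rho g (rho g^-1%g x) = x.
Proof. by have := rhoK g^-1%g x; rewrite invgK. Qed.

Lemma partial_iso_rho g : partial_iso mu rho (rho g) setT.
Proof.
have [_ _ mrho mrhoP] := HA.
have imE (B : set X) : rho g @` B = rho g^-1%g @^-1` B.
  apply/seteqP; split => x; first by move=> [y By <-]; rewrite /= rhoK.
  by move=> Bx; exists (rho g^-1%g x); rewrite ?rhoVK.
split => //.
- by move=> x y _ _ e; rewrite -(rhoK g x) e rhoK.
- move=> B mB _; rewrite imE; split; last exact: mrhoP.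
  by rewrite -[_ @^-1` _]setTI; apply: mrho.
- by move=> x _; exists g.
Qed.

Lemma iota_valid (xi : cp_car R X G) :
  lm_valid (l := cp_mod mu G) xi -> lm_valid (l := rr_mod mu rho) (iota xi).
Proof.
by move=> v _ /mapP [p pin ->]; split; [exact: v|exact: partial_iso_rho].
Qed.

Hypothesis HF : free_action rho.

Lemma rr_kernel_iota_orbit (xi : cp_car R X G) x g :
  rr_kernel (iota xi) x (rho g^-1%g x) = cp_coef xi x g.
Proof.
rewrite /rr_kernel /iota_incl big_map /cp_coef [RHS]big_mkcond.
apply: eq_bigr => p _ /=; congr (if _ then _ else _).
apply/asboolP/eqP => [[_ e]|->]; last by split; rewrite ?rhoVK.
have [_ rhoM _ _] := HA.
have /HF gp : rho (g^-1 * p.1)%g (rho g^-1%g x) = rho g^-1%g x.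
  by rewrite rhoM e.
by rewrite -(mulVKg g p.1) gp mulg1.
Qed.

Lemma rr_kernel_iota_eq0 (xi : cp_car R X G) x :
  (forall y, rr_kernel (iota xi) x y = 0) <-> (forall g, cp_coef xi x g = 0).
Proof.
split => [z g|z y]; first by rewrite -rr_kernel_iota_orbit.
have [[g ->]|nxy] := pselect (exists g, y = rho g^-1%g x).
  by rewrite rr_kernel_iota_orbit.
rewrite /rr_kernel big1_seq // => p /mapP [q _ ->] /=.
case: asboolP => // -[_ e]; case: nxy; exists q.1.
by rewrite -e rhoK.
Qed.

Lemma rank_iota (xi : cp_car R X G) :
  rank mu (M := rr_mod mu rho) (iota xi) = rank mu (M := cp_mod mu G) xi.
Proof.
exact: rank_fiberwise_eq cp_fiberwise rr_fiberwise (rr_kernel_iota_eq0 xi).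
Qed.

Hypothesis SB : standard_borel R X.

Section GraphPieces.
Variables (phi : X -> X) (A : set X) (en : nat -> G).
Hypothesis PI : partial_iso mu rho phi A.

Definition graph_piece n := [set y | A y /\ phi y = rho (en n) y].
Local Notation B := (seqDU graph_piece).
Local Notation U N := (\big[setU/set0]_(k < N) graph_piece k).

(* On [B n], [phi] is [rho (en n)], so [f phi] restricted to [B n] is
   [f 1_(phi (B n)) u_(en n)]. *)
Definition piece_approx (f : X -> C) N : cp_car R X G :=
  mkseq (fun n => (en n, mask (phi @` B n) f)) N.

Lemma graph_piece_measurable n : measurable (graph_piece n).
Proof.
have [mA mphi _ _ _] := PI; have [_ _ mrho _] := HA.
exact: measurable_eq_standard_borel SB mA mphi
  (measurable_funS measurableT (subsetT A) (mrho (en n))).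
Qed.

Lemma graph_pieces_cover :
  (forall g, exists n, en n = g) -> A `<=` \bigcup_n graph_piece n.
Proof.
move=> en_surj y Ay; have [_ _ _ _ orb] := PI.
have [g e] := orb y Ay; have [n eng] := en_surj g.
by exists n => //; split; rewrite ?eng.
Qed.

Lemma graph_piece_image n x y :
  rho (en n) y = x /\ (phi @` B n) x <-> B n y /\ phi y = x.
Proof.
split => [[e [y' By' phiy']]|[Bny <-]]; last first.
  by have [_ e] := subset_seqDU Bny; split; [rewrite e|exists y].
have [_ e'] := subset_seqDU By'.
suff -> : y = y' by [].
by rewrite -(rhoK (en n) y) e -phiy' e' rhoK.
Qed.

Lemma rr_kernel_piece_approx f N x y :
  rr_kernel (iota (piece_approx f N)) x y =
  if `[< U N y >] then (if `[< phi y = x >] then f x else 0) else 0.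
Proof.
rewrite /rr_kernel /iota_incl /piece_approx /mkseq -map_comp !big_map.
rewrite bigsetU_seqDU -(sum_if_trivIset _ _ _ (trivIset_seqDU _)).
apply: eq_bigr => n _ /=.
rewrite maskE; have := graph_piece_image n x y.
case: (asboolP (True /\ _)); case: (asboolP ((phi @` B n) x));
  case: (asboolP (B n y)); case: (asboolP (phi y = x)); intros;
  first [done | tauto].
Qed.

Lemma rr_kernel_approx_error f N x :
  ~ (phi @` (A `\` U N)) x ->
  forall y,
    rr_kernel (rr_sub [:: (f, (phi, A))] (iota (piece_approx f N))) x y = 0.
Proof.
move=> nx y.
rewrite rr_kernel_sub rr_kernel_piece_approx /rr_kernel big_seq1 /=.
have UA : U N `<=` A by rewrite -bigcup_mkord => z [k _ []].
case: (asboolP (U N y)) => [UNy|nUNy]; case: asboolP => [[Ay e]|nAe].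
- by rewrite asboolT ?subrr.
- case: asboolP => [e|]; rewrite ?subrr //.
  by case: nAe; split => //; exact: UA.
- by case: nx; exists y.
- by rewrite subrr.
Qed.

Lemma approx_partial_iso f e :
  (forall g, exists n, en n = g) -> Linf f -> 0 < e ->
  exists2 s, lm_valid (l := cp_mod mu G) s &
    (rank mu (M := rr_mod mu rho) (rr_sub [:: (f, (phi, A))] (iota s))
      < e%:E)%E.
Proof.
move=> en_surj Lf e0; have [mA _ _ imP _] := PI.
have muA : (mu A < +oo)%E.
  by apply: le_lt_trans (probability_le1 _ _) _ => //; exact: ltey.
have [N muN] := measure_setD_bigsetU_lt mA muA graph_piece_measurable
  (graph_pieces_cover en_surj) e0.
have mB n : measurable (B n).
  exact: seqDU_measurable graph_piece_measurable n.
have BA n : B n `<=` A by move=> y By; have [] := subset_seqDU By.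
have mAU : measurable (A `\` U N).
  apply: measurableD => //; apply: bigsetU_measurable => k _.
  exact: graph_piece_measurable.
have [mphiAU muphiAU] := imP _ mAU (@subDsetl _ A (U N)).
exists (piece_approx f N).
  move=> p /mapP [n _ ->]; apply: Linf_mask Lf.
  exact: (imP _ (mB n) (BA n)).1.
apply/(rank_ltP rr_fiberwise); exists (phi @` (A `\` U N)); split => //.
  by rewrite muphiAU.
by apply: aeW => x; exact: rr_kernel_approx_error.
Qed.

End GraphPieces.

Lemma iota_dense (u : rr_car R X) (e : R) :
  countable [set: G] -> lm_valid (l := rr_mod mu rho) u -> 0 < e ->
  exists2 s, lm_valid (l := cp_mod mu G) s &
    (rank mu (M := rr_mod mu rho) (rr_sub u (iota s)) < e%:E)%E.
Proof.
move=> CG; have [en en_surj] := countable_enum 1%g CG.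
elim: u e => [|[f [phi A]] u ih] e uv e0.
  exists [::] => //; apply/(rank_ltP rr_fiberwise); exists set0.
  split; rewrite ?measure0 ?lte_fin //.
  by apply: aeW => x _ y; rewrite /rr_kernel big_nil.
have [Lf PI] := uv _ (mem_head _ _).
have e20 : 0 < e / 2 by rewrite divr_gt0.
have [s1 v1 r1] := approx_partial_iso PI en_surj Lf e20.
have uv' : lm_valid (l := rr_mod mu rho) u.
  by move=> q qu; apply: uv; rewrite inE qu orbT.
have [s2 v2 r2] := ih _ uv' e20.
exists (s1 ++ s2); first by move=> q; rewrite mem_cat => /orP[/v1|/v2].
have -> : e = e / 2 + e / 2 by lra.
apply: (rank_ltD rr_fiberwise) r1 r2 => x h1 h2 y.
move: (h1 y) (h2 y) => /=.
rewrite !rr_kernel_sub -(cat1s (f, (phi, A)) u) iota_cat !rr_kernel_cat.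
by move=> /subr0_eq -> /subr0_eq ->; rewrite subrr.
Qed.

End CrossedProductAndRelationRing.
End RelationRingCompletion.

Theorem proposition4p1 (R : realType) (d : measure_display)
  (X : measurableType d) (mu : probability X R)
  (G : groupType) (rho : G -> X -> X) :
  standard_borel R X ->
  countable [set: G] ->
  mp_action mu rho ->
  free_action rho ->
  completion_iso mu (cp_mod mu G) (rr_mod mu rho) (iota_incl rho).
Proof.
move=> SB CG HA HF.
apply: completion_iso_dense_isometry (rr_fiberwise mu rho) _ _ _.
- exact: iota_valid.
- by move=> a b; have := rank_iota HA HF (cp_sub a b); rewrite iota_sub.
- by move=> u e uv e0; exact: iota_dense.
Qed.
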